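(* Let $\Omega$ be a Polish space, $m$ a finite positive Borel measure on $\Omega$ and $f$ an entropy function. Then the internal energy $H_{f,m}\colon\mathcal M(\Omega)\to\mathbb R\cup\{+\infty\}$ is totally substitutable.
   Context: An entropy function is a proper, convex, lower semicontinuous $f\colon[0,\infty)\to[0,\infty]$ with $f(s)/s\to+\infty$ as $s\to\infty$. $\mathcal M(\Omega)$ is the Banach lattice of finite signed Borel measures (setwise order, total variation norm). $H_{f,m}(\mu)=\int_\Omega f(d\mu/dm)\,dm$ if $\mu$ is positive and absolutely continuous w.r.t. $m$, and $+\infty$ otherwise (if $m=0$, $H_{f,0}(\mu)=0$ for $\mu=0$ and $+\infty$ otherwise). On a Banach lattice $Y$, $[a,b]=\{y:a\leq y\leq b\}$; $H\colon Y\to\mathbb R\cup\{+\infty\}$ is totally substitutable if for all $\mu_1,\mu_2\in Y$ and all $\mu_1',\mu_2'\in[\mu_1\wedge\mu_2,\mu_1\vee\mu_2]$ with $\mu_1'+\mu_2'=\mu_1+\mu_2$ one has $H(\mu_1')+H(\mu_2')\leq H(\mu_1)+H(\mu_2)$. *)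

From HB Require Import structures.
From mathcomp Require Import all_boot all_order all_algebra.
From mathcomp Require Import all_classical all_reals all_analysis.
Set Implicit Arguments. Unset Strict Implicit. Unset Printing Implicit Defensive.
Import Order.TTheory GRing.Theory Num.Theory.
Import numFieldNormedType.Exports.
Local Open Scope classical_set_scope.
Local Open Scope ring_scope.

Notation Borel T := (g_sigma_algebraType (@open T)).

(** A Polish space, presented by a compatible complete metric:
    T is a complete metric space (Hausdorff) that is separable. *)
Definition polish_space (R : realType) (T : completePseudoMetricType R) : Prop :=
  hausdorff_space T /\ exists D : set T, countable D /\ dense D.

Local Open Scope ereal_scope.

(** Entropy function f : [0,oo) -> [0,+oo], represented on all of R with the
    standard convention f = +oo on (-oo,0) (so convexity/lsc on R are
    exactly convexity/lsc on [0,oo)). *)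
Definition entropy_function (R : realType) (f : R -> \bar R) : Prop :=
  (forall s : R, (s < 0)%R -> f s = +oo) /\
  [/\ (forall s : R, (0 <= s)%R -> 0 <= f s),
      (exists s : R, f s < +oo),
      (forall (s t l : R), (0 <= l <= 1)%R ->
         f (l * s + (1 - l) * t)%R <= l%:E * f s + (1 - l)%:E * f t),
      lower_semicontinuous f &
      (f s * (s^-1)%:E) @[s --> +oo%R] --> +oo].

Definition cle d (T : measurableType d) (R : realType)
  (mu nu : set T -> \bar R) : Prop :=
  forall A, measurable A -> mu A <= nu A.

Definition cmeet d (T : measurableType d) (R : realType)
  (mu nu : {charge set T -> \bar R}) : set T -> \bar R :=
  fun A => ereal_inf [set mu (A `&` B) + nu (A `\` B) | B in measurable].

Definition cjoin d (T : measurableType d) (R : realType)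
  (mu nu : {charge set T -> \bar R}) : set T -> \bar R :=
  fun A => ereal_sup [set mu (A `&` B) + nu (A `\` B) | B in measurable].

Definition internal_energy d (T : measurableType d) (R : realType)
  (f : R -> \bar R) (m : {finite_measure set T -> \bar R})
  (mu : {charge set T -> \bar R}) : \bar R :=
  if `[< (forall A, measurable A -> 0 <= mu A) /\ (mu `<< m) >]
  then \int[m]_x f (fine (Radon_Nikodym mu m x))
  else +oo.

Definition totally_substitutable d (T : measurableType d) (R : realType)
  (H : {charge set T -> \bar R} -> \bar R) : Prop :=
  forall mu1 mu2 mu1' mu2' : {charge set T -> \bar R},
    cle (cmeet mu1 mu2) mu1' -> cle mu1' (cjoin mu1 mu2) ->
    cle (cmeet mu1 mu2) mu2' -> cle mu2' (cjoin mu1 mu2) ->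
    (forall A, measurable A -> mu1' A + mu2' A = mu1 A + mu2 A) ->
    H mu1' + H mu2' <= H mu1 + H mu2.

From HB Require Import structures.
From mathcomp Require Import all_boot all_order all_algebra.
From mathcomp Require Import all_classical all_reals all_analysis.
From mathcomp Require Import ring lra measurable_realfun.

Set Implicit Arguments.
Unset Strict Implicit.
Unset Printing Implicit Defensive.
Import Order.TTheory GRing.Theory Num.Theory.
Import numFieldNormedType.Exports.
Local Open Scope classical_set_scope.
Local Open Scope ring_scope.

(* Let rho1, rho2 be the densities of mu1, mu2 with respect to m.  A charge nu
   with mu1 /\ mu2 <= nu <= mu1 \/ mu2 is nonnegative and dominated by m, and on
   every set where rho2 <= rho1 it lies between mu2 and mu1; hence its density
   lies a.e. between min(rho1, rho2) and max(rho1, rho2).  The constraint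
   mu1' + mu2' = mu1 + mu2 also passes to densities a.e.  Pointwise, if b1 lies
   between a1 and a2 and b1 + b2 = a1 + a2, then (b1, b2) is a convex
   combination of (a1, a2) and (a2, a1), so convexity of f gives
   f b1 + f b2 <= f a1 + f a2; integrating against m gives the claim. *)

Section convex_exchange.
Context (R : realType) (f : R -> \bar R).
Hypothesis f_convex : forall s t l : R, 0 <= l <= 1 ->
  (f (l * s + (1 - l) * t) <= l%:E * f s + (1 - l)%:E * f t)%E.

Lemma convex_exchange_le (a1 a2 b1 b2 : R) :
  a1 <= b1 <= a2 -> b1 + b2 = a1 + a2 -> (f b1 + f b2 <= f a1 + f a2)%E.
Proof.
move=> /andP[a1b1 b1a2] sum_eq.
have [a12|a12] := eqVneq a1 a2.
  have -> : b1 = a1 by apply/eqP; rewrite eq_le a1b1 a12 b1a2.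
  by have -> : b2 = a2 by lra.
(* (b1, b2) = l (a1, a2) + (1 - l) (a2, a1) *)
pose l := (a2 - b1) / (a2 - a1).
have a21_neq0 : a2 - a1 != 0 by rewrite subr_eq0 eq_sym.
have l01 : 0 <= l <= 1.
  rewrite divr_ge0 ?subr_ge0 ?(le_trans a1b1) //=.
  by rewrite ler_pdivrMr ?subr_gt0 ?lt_neqAle ?a12 ?(le_trans a1b1) //=; lra.
have b1E : b1 = l * a1 + (1 - l) * a2 by rewrite /l; field.
have b2E : b2 = (1 - l) * a1 + (1 - (1 - l)) * a2.
  have -> : b2 = a1 + a2 - b1 by lra.
  by rewrite /l; field.
have l01' : 0 <= 1 - l <= 1 by lra.
rewrite [in X in (f X + _)%E]b1E b2E.
apply: le_trans (leeD (f_convex a1 a2 l01) (f_convex a1 a2 l01')) _.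
have -> : 1 - (1 - l) = l by lra.
have [l_ge0 l'_ge0] : (0 <= l%:E /\ 0 <= (1 - l)%:E)%E by rewrite !lee_fin; lra.
rewrite addeACA -!ge0_muleDl //.
by rewrite -!EFinD subrKC subrK !mul1e.
Qed.

Lemma convex_exchange_minmax (a1 a2 b1 b2 : R) :
  Num.min a1 a2 <= b1 <= Num.max a1 a2 -> b1 + b2 = a1 + a2 ->
  (f b1 + f b2 <= f a1 + f a2)%E.
Proof.
wlog a12 : a1 a2 / a1 <= a2 => [wlog_le|].
  case/orP: (le_total a1 a2) => [/wlog_le//|a21].
  by rewrite minC maxC (addrC a1) (addeC (f a1)); exact: wlog_le.
by rewrite (min_idPl a12) (max_idPr a12); exact: convex_exchange_le.
Qed.

Lemma convex_exchange_fine (a1 a2 b1 b2 : \bar R) :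
  a1 \is a fin_num -> a2 \is a fin_num -> b1 \is a fin_num -> b2 \is a fin_num ->
  (Order.min a1 a2 <= b1 <= Order.max a1 a2)%E -> (b1 + b2 = a1 + a2)%E ->
  (f (fine b1) + f (fine b2) <= f (fine a1) + f (fine a2))%E.
Proof.
move: a1 a2 b1 b2 => [a1||] [a2||] [b1||] [b2||] // _ _ _ _ /=.
rewrite -EFin_min -EFin_max !lee_fin -!EFinD => between [].
exact: convex_exchange_minmax.
Qed.

End convex_exchange.

Section integral_ae_le.
Local Open Scope ereal_scope.
Context d (T : measurableType d) (R : realType) (mu : {measure set T -> \bar R}).

Lemma integral_ae_le (D : set T) (g h : T -> \bar R) : measurable D ->
  mu.-integrable D g -> mu.-integrable D h ->
  (forall x, D x -> h x \is a fin_num) ->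
  (forall A, measurable A -> A `<=` D ->
    \int[mu]_(x in A) g x <= \int[mu]_(x in A) h x) ->
  {ae mu, forall x, D x -> g x <= h x}.
Proof.
move=> mD ig ih h_fin le_gh.
pose A := D `&` [set x | h x < g x].
have mA : measurable A.
  by apply: measurable_lte => //; [exact: measurable_int ih|exact: measurable_int ig].
have AD : A `<=` D := @subIsetl _ _ _.
have [igA ihA] := (integrableS mD mA AD ig, integrableS mD mA AD ih).
have gh_gt0 x : A x -> 0 < g x - h x.
  by move=> [Dx hgx]; rewrite sube_gt0 ?h_fin.
have int_abs0 : \int[mu]_(x in A) `|(g \- h) x| = 0.
  rewrite (eq_integral (g \- h)); last first.
    by move=> x /set_mem Ax; rewrite gee0_abs // ltW ?gh_gt0.
  apply/eqP; rewrite eq_le integral_ge0 ?andbT; last first.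
    by move=> x Ax; rewrite ltW ?gh_gt0.
  by rewrite integralB // sube_le0 le_gh.
have mgh : measurable_fun A (g \- h).
  by apply: emeasurable_funB; [exact: measurable_int igA|exact: measurable_int ihA].
have [N [mN N0 AN]] := (ae_eq_integral_abs mu mA mgh).1 int_abs0.
exists A; split => //.
  apply: (subset_measure0 mA mN _ N0) => x Ax; apply: AN => /= /(_ Ax) gh0.
  by have := gh_gt0 x Ax; rewrite gh0 ltxx.
by move=> x /= /not_implyP[Dx /negP]; rewrite -ltNge.
Qed.

End integral_ae_le.

Section charge_lattice.
Local Open Scope ereal_scope.
Context d (T : measurableType d) (R : realType).
Implicit Types mu nu : {charge set T -> \bar R}.

Let splitting_sumsC mu1 mu2 A :
  [set mu1 (A `&` B) + mu2 (A `\` B) | B in measurable] =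
  [set mu2 (A `&` B) + mu1 (A `\` B) | B in measurable].
Proof.
suff sub mu mu' : [set mu (A `&` B) + mu' (A `\` B) | B in measurable] `<=`
                  [set mu' (A `&` B) + mu (A `\` B) | B in measurable].
  by apply/seteqP; split; exact: sub.
move=> _ [B mB <-]; exists (~` B); first exact: measurableC.
by rewrite setDE setCK -setDE addeC.
Qed.

Lemma cjoinC mu1 mu2 : cjoin mu1 mu2 = cjoin mu2 mu1.
Proof. by apply/funext => A; rewrite /cjoin splitting_sumsC. Qed.

Lemma cmeetC mu1 mu2 : cmeet mu1 mu2 = cmeet mu2 mu1.
Proof. by apply/funext => A; rewrite /cmeet splitting_sumsC. Qed.

Lemma cmeet_ge0 mu1 mu2 A : measurable A ->
  (forall B, measurable B -> 0 <= mu1 B) -> (forall B, measurable B -> 0 <= mu2 B) ->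
  0 <= cmeet mu1 mu2 A.
Proof.
move=> mA mu1_ge0 mu2_ge0; apply/ereal_infP => _ [B mB <-].
by rewrite adde_ge0 ?mu1_ge0 ?mu2_ge0 //; [exact: measurableI|exact: measurableD].
Qed.

Lemma cjoin_null (m : {measure set T -> \bar R}) mu1 mu2 A :
  mu1 `<< m -> mu2 `<< m -> measurable A -> m A = 0 -> cjoin mu1 mu2 A <= 0.
Proof.
move=> /null_content_dominatesP mu1m /null_content_dominatesP mu2m mA mA0.
apply: ge_ereal_sup => _ [B mB <-].
have [mAB mADB] := (measurableI _ _ mA mB, measurableD mA mB).
rewrite mu1m ?mu2m ?adde0 //.
- exact: subset_measure0 (@subDsetl _ _ _) mA0.
- exact: subset_measure0 (@subIsetl _ _ _) mA0.
Qed.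

Lemma between_cmeet_cjoin_ge0_dominates (m : {measure set T -> \bar R}) mu1 mu2 nu :
  (forall A, measurable A -> 0 <= mu1 A) -> (forall A, measurable A -> 0 <= mu2 A) ->
  mu1 `<< m -> mu2 `<< m ->
  cle (cmeet mu1 mu2) nu -> cle nu (cjoin mu1 mu2) ->
  (forall A, measurable A -> 0 <= nu A) /\ nu `<< m.
Proof.
move=> mu1_ge0 mu2_ge0 mu1m mu2m meet_nu nu_join.
have nu_ge0 A : measurable A -> 0 <= nu A.
  by move=> mA; exact: le_trans (cmeet_ge0 mA mu1_ge0 mu2_ge0) (meet_nu _ mA).
split => //; apply/null_content_dominatesP => A mA mA0.
apply/eqP; rewrite eq_le nu_ge0 // andbT.
exact: le_trans (nu_join _ mA) (cjoin_null mu1m mu2m mA mA0).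
Qed.

End charge_lattice.

Section Radon_Nikodym_order.
Local Open Scope ereal_scope.
Local Open Scope charge_scope.
Context d (T : measurableType d) (R : realType).
Variable m : {sigma_finite_measure set T -> \bar R}.
Implicit Types mu nu : {charge set T -> \bar R}.

Lemma Radon_Nikodym_ae_le (D : set T) nu1 nu2 : measurable D ->
  nu1 `<< m -> nu2 `<< m ->
  (forall A, measurable A -> A `<=` D -> nu1 A <= nu2 A) ->
  {ae m, forall x, D x -> 'd nu1 '/d m x <= 'd nu2 '/d m x}.
Proof.
move=> mD nu1m nu2m le12; apply: integral_ae_le => //.
- by apply: (integrableS measurableT) => //; exact: Radon_Nikodym_integrable.
- by apply: (integrableS measurableT) => //; exact: Radon_Nikodym_integrable.
- by move=> x _; exact: Radon_Nikodym_fin_num.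
- by move=> A mA AD; rewrite -!Radon_Nikodym_integral //; exact: le12.
Qed.

Lemma Radon_Nikodym_add_ae mu1 mu2 nu1 nu2 :
  mu1 `<< m -> mu2 `<< m -> nu1 `<< m -> nu2 `<< m ->
  (forall A, measurable A -> nu1 A + nu2 A = mu1 A + mu2 A) ->
  'd nu1 '/d m \+ 'd nu2 '/d m = 'd mu1 '/d m \+ 'd mu2 '/d m %[ae m].
Proof.
move=> mu1m mu2m nu1m nu2m sum_eq; apply: integral_ae_eq => //.
- by apply: integrableD => //; exact: Radon_Nikodym_integrable.
- by apply: emeasurable_funD; apply: measurable_int; exact: Radon_Nikodym_integrable.
- move=> A _ mA; rewrite !integralD //;
    try by apply: (integrableS measurableT) => //; exact: Radon_Nikodym_integrable.
  by rewrite -!Radon_Nikodym_integral // sum_eq.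
Qed.

Lemma cjoin_le mu1 mu2 A : mu1 `<< m -> mu2 `<< m -> measurable A ->
  (forall x, A x -> 'd mu2 '/d m x <= 'd mu1 '/d m x) ->
  cjoin mu1 mu2 A <= mu1 A.
Proof.
move=> mu1m mu2m mA le21; apply: ge_ereal_sup => _ [B mB <-].
have mADB := measurableD mA mB.
rewrite [leRHS](chargeDI mu1 mA mB) [leRHS]addeC; apply: leeD2l.
rewrite !(Radon_Nikodym_integral (mu := m)) //; apply: le_integral => //.
- by apply: (integrableS measurableT) => //; exact: Radon_Nikodym_integrable.
- by apply: (integrableS measurableT) => //; exact: Radon_Nikodym_integrable.
- by move=> x /set_mem [Ax _]; exact: le21.
Qed.

Lemma cmeet_ge mu1 mu2 A : mu1 `<< m -> mu2 `<< m -> measurable A ->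
  (forall x, A x -> 'd mu2 '/d m x <= 'd mu1 '/d m x) ->
  mu2 A <= cmeet mu1 mu2 A.
Proof.
move=> mu1m mu2m mA le21; apply/ereal_infP => _ [B mB <-].
have mAB := measurableI _ _ mA mB.
rewrite [leLHS](chargeDI mu2 mA mB) [leLHS]addeC; apply: leeD2r.
rewrite !(Radon_Nikodym_integral (mu := m)) //; apply: le_integral => //.
- by apply: (integrableS measurableT) => //; exact: Radon_Nikodym_integrable.
- by apply: (integrableS measurableT) => //; exact: Radon_Nikodym_integrable.
- by move=> x /set_mem [Ax _]; exact: le21.
Qed.

Lemma Radon_Nikodym_between_ae mu1 mu2 nu :
  mu1 `<< m -> mu2 `<< m -> nu `<< m ->
  cle (cmeet mu1 mu2) nu -> cle nu (cjoin mu1 mu2) ->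
  {ae m, forall x, Order.min ('d mu1 '/d m x) ('d mu2 '/d m x) <= 'd nu '/d m x
                   <= Order.max ('d mu1 '/d m x) ('d mu2 '/d m x)}.
Proof.
wlog suff half : mu1 mu2 / mu1 `<< m -> mu2 `<< m -> nu `<< m ->
    cle (cmeet mu1 mu2) nu -> cle nu (cjoin mu1 mu2) ->
    {ae m, forall x, 'd mu2 '/d m x <= 'd mu1 '/d m x ->
                     'd mu2 '/d m x <= 'd nu '/d m x <= 'd mu1 '/d m x}.
  move=> mu1m mu2m num meet_nu nu_join.
  have := half _ _ mu2m mu1m num; rewrite cmeetC cjoinC => /(_ meet_nu nu_join).
  apply: filterS2 (half _ _ mu1m mu2m num meet_nu nu_join) => x le21 le12.
  case/orP: (le_total ('d mu1 '/d m x) ('d mu2 '/d m x)) => le.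
  - by rewrite (min_idPl le) (max_idPr le); exact: le12.
  - by rewrite (min_idPr le) (max_idPl le); exact: le21.
move=> mu1m mu2m num meet_nu nu_join.
pose D := [set x | 'd mu2 '/d m x <= 'd mu1 '/d m x].
have mD : measurable D.
  by rewrite -[D]setTI; apply: measurable_lee => //; apply: measurable_int;
    exact: Radon_Nikodym_integrable.
have lower : {ae m, forall x, D x -> 'd mu2 '/d m x <= 'd nu '/d m x}.
  apply: Radon_Nikodym_ae_le => // A mA AD.
  exact: le_trans (cmeet_ge mu1m mu2m mA AD) (meet_nu _ mA).
have upper : {ae m, forall x, D x -> 'd nu '/d m x <= 'd mu1 '/d m x}.
  apply: Radon_Nikodym_ae_le => // A mA AD.
  exact: le_trans (nu_join _ mA) (cjoin_le mu1m mu2m mA AD).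
by apply: filterS2 lower upper => x lo up Dx; rewrite lo ?up.
Qed.

End Radon_Nikodym_order.

Section internal_energy.
Local Open Scope ereal_scope.
Local Open Scope charge_scope.
Context d (T : measurableType d) (R : realType) (f : R -> \bar R).
Hypothesis f_entropy : entropy_function f.
Variable m : {finite_measure set T -> \bar R}.
Implicit Types nu : {charge set T -> \bar R}.

Lemma entropy_function_ge0 s : 0 <= f s.
Proof.
have [f_neg [f_ge0 _ _ _ _]] := f_entropy.
by have [/f_ge0 //|/f_neg ->] := leP 0%R s; rewrite leey.
Qed.

Lemma internal_energy_ge0 nu : 0 <= internal_energy f m nu.
Proof.
rewrite /internal_energy; case: ifP => _; last exact: leey.
by apply: integral_ge0 => x _; exact: entropy_function_ge0.
Qed.

Lemma internal_energy_neqNy nu : internal_energy f m nu != -oo.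
Proof. by rewrite -ltNye (lt_le_trans ltNy0) ?internal_energy_ge0. Qed.

Lemma internal_energyE nu : (forall A, measurable A -> 0 <= nu A) -> nu `<< m ->
  internal_energy f m nu = \int[m]_x f (fine ('d nu '/d m x)).
Proof. by move=> nu_ge0 num; rewrite /internal_energy asboolT. Qed.

Lemma measurable_entropy_density nu : nu `<< m ->
  measurable_fun setT (fun x => f (fine ('d nu '/d m x))).
Proof.
have [_ [_ _ _ f_lsc _]] := f_entropy.
move=> num; apply: measurableT_comp; first exact: lower_semicontinuous_measurable.
by apply: measurableT_comp => //; apply: measurable_int; exact: Radon_Nikodym_integrable.
Qed.

Theorem internal_energy_totally_substitutable :
  totally_substitutable (internal_energy f m).
Proof.
move=> mu1 mu2 mu1' mu2' meet_mu1' mu1'_join meet_mu2' mu2'_join sum_eq.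
have [[mu1_ge0 mu1m]|mu1_out] :=
  asboolP ((forall A, measurable A -> 0 <= mu1 A) /\ mu1 `<< m); last first.
  by rewrite [internal_energy f m mu1]/internal_energy (asboolF mu1_out) addye ?internal_energy_neqNy ?leey.
have [[mu2_ge0 mu2m]|mu2_out] :=
  asboolP ((forall A, measurable A -> 0 <= mu2 A) /\ mu2 `<< m); last first.
  by rewrite [internal_energy f m mu2]/internal_energy (asboolF mu2_out) addey ?internal_energy_neqNy ?leey.
have [mu1'_ge0 mu1'm] := between_cmeet_cjoin_ge0_dominates mu1_ge0 mu2_ge0 mu1m mu2m
  meet_mu1' mu1'_join.
have [mu2'_ge0 mu2'm] := between_cmeet_cjoin_ge0_dominates mu1_ge0 mu2_ge0 mu1m mu2m
  meet_mu2' mu2'_join.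
have density_ge0 nu x : 0 <= f (fine ('d nu '/d m x)) := entropy_function_ge0 _.
rewrite !internal_energyE // -!ge0_integralD //; try exact: measurable_entropy_density.
apply: ae_ge0_le_integral => //; try by move=> x _; exact: adde_ge0.
1,2: by apply: emeasurable_funD; exact: measurable_entropy_density.
have [_ [_ _ f_convex _ _]] := f_entropy.
apply: filterS2 (Radon_Nikodym_between_ae mu1m mu2m mu1'm meet_mu1' mu1'_join)
  (Radon_Nikodym_add_ae mu1m mu2m mu1'm mu2'm sum_eq) => x between sum_x _.
by apply: convex_exchange_fine; rewrite ?Radon_Nikodym_fin_num ?sum_x.
Qed.

End internal_energy.

Theorem lemma2p48 (R : realType) (T : completePseudoMetricType R)
  (hT : polish_space T)
  (m : {finite_measure set Borel T -> \bar R}) (f : R -> \bar R)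
  (hf : entropy_function f) :
  totally_substitutable (internal_energy f m).
Proof.
exact: internal_energy_totally_substitutable.
Qed.
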